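(* Let $\lambda>0$, $\ell>0$, $a_1,a_2,a_3\in\mathbb{R}$, fix $z>0$, and consider the map $(x_0,y_0)\mapsto(x,y)$ given by $$x=x_0+\frac{\lambda z}{2\pi\ell}\left(a_1+2a_3\frac{x_0}{\ell}+2\frac{x_0y_0}{\ell^2}\right),\qquad y=y_0+\frac{\lambda z}{2\pi\ell}\left(a_2+\frac{3y_0^2+x_0^2}{\ell^2}\right).$$ Let $A\doteq a_3+\frac{2\pi\ell^2}{3\lambda z}$ and assume $A\neq0$. Then the set of caustic points of this map (points $(x,y)$ that are images of some $(x_0,y_0)$ at which the Jacobian determinant $\det\partial(x,y)/\partial(x_0,y_0)$ vanishes) is the union, over the two choices of sign, of the curves $\zeta\in\mathbb{R}\mapsto(x_c(\zeta),y_c(\zeta))$ with $$x_c(\zeta)=a_1\frac{\lambda z}{2\pi\ell}-\frac{\sqrt3\,\lambda z}{4\pi\ell}A^2\sinh(\zeta)\left[\cosh(\zeta)\pm1\right],$$ $$y_c(\zeta)=a_2\frac{\lambda z}{2\pi\ell}-\frac{\pi\ell^3}{6\lambda z}+\frac{3\lambda z}{4\pi\ell}A^2\cosh(\zeta)\left[\cosh(\zeta)\mp1\right].$$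
   Context: In the formulas for $x_c$ and $y_c$, the upper signs are taken together and the lower signs are taken together. *)

From Stdlib Require Import Reals.
From Coquelicot Require Import Coquelicot.
Open Scope R_scope.

Definition map_x (lam l a1 a3 z x0 y0 : R) : R :=
  x0 + (lam * z) / (2 * PI * l) * (a1 + 2 * a3 * (x0 / l) + 2 * (x0 * y0) / (l ^ 2)).

Definition map_y (lam l a2 z x0 y0 : R) : R :=
  y0 + (lam * z) / (2 * PI * l) * (a2 + (3 * y0 ^ 2 + x0 ^ 2) / (l ^ 2)).

Definition jac_det (lam l a1 a2 a3 z x0 y0 : R) : R :=
  Derive (fun t => map_x lam l a1 a3 z t y0) x0 *
  Derive (fun t => map_y lam l a2 z x0 t) y0 -
  Derive (fun t => map_x lam l a1 a3 z x0 t) y0 *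
  Derive (fun t => map_y lam l a2 z t y0) x0.

Definition Aconst (lam l a3 z : R) : R := a3 + 2 * PI * l ^ 2 / (3 * lam * z).

(* Caustic curves; s = 1 is the upper-sign curve, s = -1 the lower-sign one:
   x_c uses (cosh + s), y_c uses (cosh - s). *)
Definition x_c (lam l a1 a3 z s zeta : R) : R :=
  a1 * (lam * z) / (2 * PI * l)
  - sqrt 3 * lam * z / (4 * PI * l) * (Aconst lam l a3 z) ^ 2
    * sinh zeta * (cosh zeta + s).

Definition y_c (lam l a2 a3 z s zeta : R) : R :=
  a2 * (lam * z) / (2 * PI * l) - PI * l ^ 3 / (6 * lam * z)
  + 3 * lam * z / (4 * PI * l) * (Aconst lam l a3 z) ^ 2
    * cosh zeta * (cosh zeta - s).

(* With u := y0 + pi l^3 / (3 lam z), the Jacobian factors as a positive constant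
   times 3 u (u + A l) - x0^2, so the critical set is the hyperbola
   3 (u + A l / 2)^2 - x0^2 = 3 A^2 l^2 / 4 (nondegenerate because A <> 0).
   Its two branches are parametrized by (u + A l / 2, x0) = A l / 2 (s cosh t, -s sqrt 3 sinh t)
   with s = 1 or s = -1, and substituting into the map gives x_c and y_c. *)

From Stdlib Require Import Reals Lra Psatz.
From Coquelicot Require Import Coquelicot.
Open Scope R_scope.

Lemma cosh_sqr_sub_sinh_sqr (t : R) : cosh t ^ 2 - sinh t ^ 2 = 1.
Proof.
  unfold cosh, sinh.
  assert (Hexp : exp t * exp (- t) = 1)
    by (rewrite <- exp_plus, Rplus_opp_r; apply exp_0).
  nra.
Qed.

Lemma cosh_pos (t : R) : 0 < cosh t.
Proof. unfold cosh; pose proof (exp_pos t); pose proof (exp_pos (- t)); lra. Qed.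

Lemma unit_hyperbola_param (q r : R) :
  q ^ 2 - r ^ 2 = 1 <->
  exists s t : R, (s = 1 \/ s = -1) /\ q = s * cosh t /\ r = s * sinh t.
Proof.
  split.
  - intros Hqr.
    set (s := if Rle_dec 0 q then 1 else -1).
    assert (Hs : s = 1 \/ s = -1) by (unfold s; destruct Rle_dec; auto).
    assert (Hsq : 0 <= s * q) by (unfold s; destruct Rle_dec; lra).
    assert (Hss : s * s = 1) by (destruct Hs as [-> | ->]; ring).
    exists s, (arcsinh (s * r)); split; [exact Hs |].
    pose proof (cosh_sqr_sub_sinh_sqr (arcsinh (s * r))) as Hch.
    pose proof (cosh_pos (arcsinh (s * r))).
    rewrite sinh_arcsinh in *.
    assert (Hcosh : cosh (arcsinh (s * r)) = s * q) by nra.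
    rewrite Hcosh; split.
    + transitivity (s * s * q); [rewrite Hss |]; ring.
    + transitivity (s * s * r); [rewrite Hss |]; ring.
  - intros (s & t & Hs & -> & ->).
    rewrite <- (cosh_sqr_sub_sinh_sqr t).
    destruct Hs as [-> | ->]; ring.
Qed.

Section Caustic.

Variables lam l z a1 a2 a3 : R.
Hypotheses (Hlam : 0 < lam) (Hl : 0 < l) (Hz : 0 < z).

Let A := Aconst lam l a3 z.

Lemma jac_det_factor (x0 y0 : R) :
  let u := y0 + PI * l ^ 3 / (3 * lam * z) in
  jac_det lam l a1 a2 a3 z x0 y0 =
  (lam * z / (PI * l ^ 3)) ^ 2 * (3 * u * (u + A * l) - x0 ^ 2).
Proof.
  intros u; unfold u, A, Aconst, jac_det.
  pose proof PI_RGT_0.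
  assert (Hnz : PI <> 0 /\ l <> 0 /\ lam <> 0 /\ z <> 0) by lra.
  assert (Hxx : Derive (fun t => map_x lam l a1 a3 z t y0) x0 =
                1 + lam * z / (2 * PI * l) * (2 * a3 / l + 2 * y0 / l ^ 2))
    by (apply is_derive_unique; unfold map_x; auto_derive; [exact I | field; lra]).
  assert (Hxy : Derive (fun t => map_x lam l a1 a3 z x0 t) y0 =
                lam * z / (2 * PI * l) * (2 * x0 / l ^ 2))
    by (apply is_derive_unique; unfold map_x; auto_derive; [exact I | field; lra]).
  assert (Hyx : Derive (fun t => map_y lam l a2 z t y0) x0 =
                lam * z / (2 * PI * l) * (2 * x0 / l ^ 2))
    by (apply is_derive_unique; unfold map_y; auto_derive; [exact I | field; lra]).
  assert (Hyy : Derive (fun t => map_y lam l a2 z x0 t) y0 =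
                1 + lam * z / (2 * PI * l) * (6 * y0 / l ^ 2))
    by (apply is_derive_unique; unfold map_y; auto_derive; [exact I | field; lra]).
  rewrite Hxx, Hxy, Hyx, Hyy.
  field; lra.
Qed.

Definition crit_x0 (s t : R) : R := - s * (sqrt 3 / 2) * A * l * sinh t.

Definition crit_y0 (s t : R) : R :=
  - PI * l ^ 3 / (3 * lam * z) + A * l / 2 * (s * cosh t - 1).

Lemma jac_det_eq0_iff (x0 y0 : R) : A <> 0 ->
  jac_det lam l a1 a2 a3 z x0 y0 = 0 <->
  exists s t : R, (s = 1 \/ s = -1) /\ x0 = crit_x0 s t /\ y0 = crit_y0 s t.
Proof.
  intros HA.
  pose proof PI_RGT_0.
  assert (H3 : sqrt 3 * sqrt 3 = 3) by (apply sqrt_sqrt; lra).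
  assert (H3pos : 0 < sqrt 3) by (apply sqrt_lt_R0; lra).
  assert (HAl : A * l <> 0) by (apply Rmult_integral_contrapositive; split; lra).
  set (u := y0 + PI * l ^ 3 / (3 * lam * z)).
  set (q := 2 * u / (A * l) + 1).
  set (r := - 2 * x0 / (sqrt 3 * (A * l))).
  assert (Hnorm : 3 * u * (u + A * l) - x0 ^ 2 = 3 * (A * l) ^ 2 / 4 * (q ^ 2 - r ^ 2 - 1)).
  { unfold q, r.
    replace (x0 ^ 2) with (3 * x0 ^ 2 / (sqrt 3 * sqrt 3)) at 1 by (rewrite H3; field).
    field; lra. }
  assert (HAl2 : 0 < (A * l) ^ 2) by (rewrite <- Rsqr_pow2; apply Rsqr_pos_lt, HAl).
  assert (Hscale : 0 < lam * z / (PI * l ^ 3))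
    by (apply Rdiv_lt_0_compat; [nra | apply Rmult_lt_0_compat; [lra | apply pow_lt; lra]]).
  assert (Hfactor : 0 < (lam * z / (PI * l ^ 3)) ^ 2 * (3 * (A * l) ^ 2 / 4))
    by (apply Rmult_lt_0_compat; [apply pow_lt, Hscale | lra]).
  assert (Hx0 : x0 = - r * (sqrt 3 * (A * l)) / 2) by (unfold r; field; lra).
  assert (Hy0 : y0 = (q - 1) * (A * l) / 2 - PI * l ^ 3 / (3 * lam * z))
    by (unfold q, u; field; lra).
  rewrite jac_det_factor; fold u; rewrite Hnorm.
  transitivity (q ^ 2 - r ^ 2 = 1); [split; nra |].
  rewrite unit_hyperbola_param.
  split; intros (s & t & Hs & H1 & H2); exists s, t; (split; [exact Hs |]).
  - unfold crit_x0, crit_y0; rewrite Hx0, Hy0, H1, H2; split; field; lra.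
  - unfold q, r, u; rewrite H1, H2; unfold crit_x0, crit_y0; split; field; lra.
Qed.

Lemma crit_x0_sqr (s t : R) : s = 1 \/ s = -1 ->
  crit_x0 s t ^ 2 = 3 / 4 * (A * l) ^ 2 * (cosh t ^ 2 - 1).
Proof.
  intros Hs.
  assert (H3 : sqrt 3 * sqrt 3 = 3) by (apply sqrt_sqrt; lra).
  rewrite <- (cosh_sqr_sub_sinh_sqr t); unfold crit_x0.
  replace 3 with (sqrt 3 * sqrt 3) at 2 by exact H3.
  destruct Hs as [-> | ->]; field.
Qed.

Lemma map_crit_point (s t : R) : s = 1 \/ s = -1 ->
  map_x lam l a1 a3 z (crit_x0 s t) (crit_y0 s t) = x_c lam l a1 a3 z s t /\
  map_y lam l a2 z (crit_x0 s t) (crit_y0 s t) = y_c lam l a2 a3 z s t.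
Proof.
  intros Hs.
  pose proof PI_RGT_0.
  unfold map_y; rewrite crit_x0_sqr by exact Hs.
  unfold map_x, x_c, y_c, crit_x0, crit_y0; fold A.
  assert (Ha3 : a3 = A - 2 * PI * l ^ 2 / (3 * lam * z)) by (unfold A, Aconst; ring).
  clearbody A; subst a3.
  destruct Hs as [-> | ->]; split; field; lra.
Qed.

End Caustic.

Theorem mainTheorem7 (lam l a1 a2 a3 z : R) :
  0 < lam -> 0 < l -> 0 < z -> Aconst lam l a3 z <> 0 ->
  forall x y : R,
    (exists x0 y0 : R,
        map_x lam l a1 a3 z x0 y0 = x /\ map_y lam l a2 z x0 y0 = y /\
        jac_det lam l a1 a2 a3 z x0 y0 = 0)
    <->
    (exists s zeta : R, (s = 1 \/ s = -1) /\
        x = x_c lam l a1 a3 z s zeta /\ y = y_c lam l a2 a3 z s zeta).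
Proof.
  intros Hlam Hl Hz HA x y; split.
  - intros (x0 & y0 & Hx & Hy & Hjac).
    apply (jac_det_eq0_iff lam l z a1 a2 a3 Hlam Hl Hz x0 y0 HA) in Hjac.
    destruct Hjac as (s & t & Hs & -> & ->).
    destruct (map_crit_point lam l z a1 a2 a3 Hlam Hl Hz s t Hs) as [Hxc Hyc].
    exists s, t; split; [exact Hs | split; congruence].
  - intros (s & t & Hs & -> & ->).
    destruct (map_crit_point lam l z a1 a2 a3 Hlam Hl Hz s t Hs) as [Hxc Hyc].
    exists (crit_x0 lam l z a3 s t), (crit_y0 lam l z a3 s t).
    split; [exact Hxc | split; [exact Hyc |]].
    apply (jac_det_eq0_iff lam l z a1 a2 a3 Hlam Hl Hz _ _ HA).
    exists s, t; auto.
Qed.
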